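(* Let $p>3$ be a prime and let $$F(p-1,p-1)=\frac{4p-3}{2^{6p-6}}\binom{4p-4}{2p-2}\binom{2p-2}{p-1}.$$ Then $F(p-1,p-1)\equiv -3p^2-12p^3+18p^3q_p(2)\pmod{p^4}$.
   Context: $q_p(2)=(2^{p-1}-1)/p$ is the Fermat quotient. (This is the value at $n=k=p-1$ of $F(n,k)=\frac{6n-2k+1}{2^{8n-2k}}\frac{\binom{2n}{n}\binom{2n+2k}{n+k}\binom{2n-2k}{n-k}\binom{n+k}{n}}{\binom{2k}{k}}$.) For rationals $a,b$, $a\equiv b\pmod{p^m}$ means $a-b=p^m c$ with $c$ a rational whose denominator is prime to $p$. *)

From HB Require Import structures.
From mathcomp Require Import all_boot all_order all_algebra.
Set Implicit Arguments. Unset Strict Implicit. Unset Printing Implicit Defensive.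
Import Order.TTheory GRing.Theory Num.Theory.
Local Open Scope ring_scope.

Definition rat_congr (p m : nat) (a b : rat) : Prop :=
  exists c : rat, coprime p `|denq c|%N /\ a - b = (p ^ m)%:R * c.

Definition fermat_q2 (p : nat) : rat := ((2 ^ p.-1)%:R - 1) / p%:R.

Definition Fpp (p : nat) : rat :=
  (4 * p - 3)%:R / (2 ^ (6 * p - 6))%:R
    * ('C(4 * p - 4, 2 * p - 2))%:R * ('C(2 * p - 2, p - 1))%:R.

From HB Require Import structures.
From mathcomp Require Import all_boot all_order all_algebra.
From mathcomp Require Import zify ring.
Set Implicit Arguments. Unset Strict Implicit. Unset Printing Implicit Defensive.
Import Order.TTheory GRing.Theory Num.Theory.

(* Applying C(2n+2, n+1) (n+1) = 2 (2n+1) C(2n, n) three times gives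
     F(p-1,p-1) = p^2 C(4p,2p) C(2p,p) / (4 (4p-1) 2^(6(p-1))).
   Babbage's congruence C(ap, bp) = C(a, b) mod p^2 makes the two binomials
   6 and 2 modulo p^2, and 2^(p-1) = 1 + p q with q = q_p(2), so modulo p^4
     F(p-1,p-1) = 3p^2 / ((4p-1) (1+pq)^6) = -3p^2 (1+4p) (1-6pq). *)

Lemma prime_dvd_bin_mulp p a j : prime p -> ~~ (p %| j) -> p %| 'C(a * p, j).
Proof.
move=> p_pr; case: j => [|j]; first by rewrite dvdn0.
move=> pNj; have := mul_bin_diag (a * p) j.
rewrite -(Gauss_dvdr _ (_ : coprime p j.+1)) ?prime_coprime //.
by move <-; rewrite dvdn_mulr ?dvdn_mull.
Qed.

Lemma prime_dvd_bin_ndvd p i : prime p -> ~~ (p %| i) -> p %| 'C(p, i).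
Proof.
move=> p_pr pNi; case: (ltngtP i p) => [lt_ip|lt_pi|eq_ip].
- apply: prime_dvd_bin => //; rewrite lt_ip andbT lt0n.
  by apply: contra pNi => /eqP ->.
- by rewrite bin_small.
- by rewrite eq_ip dvdnn in pNi.
Qed.

Lemma dvdn_vandermonde_term p a b j : prime p -> j <= b.+1 * p ->
  j != b * p -> j != b.+1 * p -> p ^ 2 %| 'C(a * p, j) * 'C(p, b.+1 * p - j).
Proof.
move=> p_pr le_j_bp neq_bp neq_b1p; have p_gt0 := prime_gt0 p_pr.
have [/dvdnP[k def_j]|pNj] := boolP (p %| j).
  move: le_j_bp neq_bp neq_b1p; rewrite def_j leq_pmul2r ?eqn_pmul2r // => *.
  by rewrite -mulnBl (@bin_small p) ?muln0 // ltn_Pmull //; lia.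
rewrite expnS expn1 dvdn_mul ?prime_dvd_bin_mulp ?prime_dvd_bin_ndvd //.
by apply: contra pNj => pX; rewrite -(dvdn_addl j pX) subnKC // dvdn_mull.
Qed.

(* Babbage: in the Vandermonde expansion of C(ap + p, (b+1)p) only the terms
   j = bp and j = (b+1)p survive modulo p^2. *)
Lemma bin_mulp_mod p a b : prime p -> 'C(a * p, b * p) = 'C(a, b) %[mod p ^ 2].
Proof.
move=> p_pr; have p_gt0 := prime_gt0 p_pr.
elim: a b => [|a IHa] [|b]; rewrite ?bin0 //.
  by rewrite mul0n !bin0n muln_eq0 /= eqn0Ngt p_gt0.
set N := b.+1 * p; set F := fun j => 'C(a * p, j) * 'C(p, N - j).
have lt_bp_N : b * p < N by rewrite /N mulSnr -addn1 leq_add2l.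
rewrite mulSnr -binomial.Vandermonde -(big_mkord xpredT F) big_nat_recr //=.
rewrite (bigD1_seq (b * p)) ?mem_index_iota ?iota_uniq //=.
have /dvdnP[k ->] : p ^ 2 %| \sum_(j <- index_iota 0 N | j != b * p) F j.
  rewrite big_seq_cond; apply: dvdn_sum => j /andP[]; rewrite mem_index_iota.
  move=> /andP[_ lt_j_N] neq_j_bp; apply: dvdn_vandermonde_term => //.
    exact: ltnW.
  by rewrite neq_ltn lt_j_N.
rewrite /F; have -> : N - b * p = p by rewrite /N mulSnr addKn.
rewrite subnn binn bin0 !muln1 addnAC addnC modnMDl.
by rewrite -modnDm !IHa modnDm binS addnC.
Qed.

Lemma mul_bin_central n : 'C((2 * n).+2, n.+1) * n.+1 = 2 * (2 * n).+1 * 'C(2 * n, n).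
Proof.
rewrite mulnC -mul_bin_diag /=.
have -> : (2 * n).+2 = 2 * ((2 * n).+1 - n) by lia.
by rewrite -!mulnA -mul_bin_down.
Qed.

Lemma mul_bin_central_Fpp n :
  (4 * n).+1 * 'C(4 * n, 2 * n) * 'C(2 * n, n) * (4 * (4 * n).+3)
  = n.+1 ^ 2 * 'C((4 * n).+4, (2 * n).+2) * 'C((2 * n).+2, n.+1).
Proof.
have E2 := mul_bin_central n.
have E4 := mul_bin_central (2 * n).+1.
have E4' := mul_bin_central (2 * n).
rewrite (_ : 2 * (2 * n).+1 = (4 * n).+2) in E4; last by lia.
rewrite (_ : 2 * (2 * n) = 4 * n) in E4'; last by lia.
apply/eqP; rewrite -(eqn_pmul2l (_ : 0 < 2 * (2 * n).+1)) //; apply/eqP.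
transitivity (2 * (4 * n).+3 * (2 * (4 * n).+1 * 'C(4 * n, 2 * n))
                * (2 * (2 * n).+1 * 'C(2 * n, n))); first by ring.
rewrite -E2 -E4'.
transitivity (2 * (4 * n).+3 * 'C((4 * n).+2, (2 * n).+1) * (2 * n).+1
                * ('C((2 * n).+2, n.+1) * n.+1)); first by ring.
by rewrite -E4; ring.
Qed.

Lemma expn1D_sqr t n : exists e, (1 + t) ^ n = 1 + n * t + t ^ 2 * e.
Proof.
elim: n => [|n [e IHe]]; first by exists 0; rewrite muln0.
by exists (n + e + t * e); rewrite expnS IHe; ring.
Qed.

Lemma fermat_little_pred a p : prime p -> coprime p a -> exists u, a ^ p.-1 = 1 + u * p.
Proof.
move=> p_pr co_pa; have p_gt0 := prime_gt0 p_pr.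
have a_gt0 : 0 < a.
  by move: co_pa; case: a => //; rewrite /coprime gcdn0 => /eqP p1; rewrite p1 in p_pr.
have a_le_ap : a <= a ^ p by rewrite -{1}(expn1 a) leq_pexp2l.
have : p %| a * (a ^ p.-1 - 1).
  by rewrite mulnBr muln1 -expnS prednK // -eqn_mod_dvd // eq_sym fermat_little.
rewrite Gauss_dvdr // => /dvdnP[u Eu]; exists u.
by rewrite -Eu subnKC // expn_gt0 a_gt0.
Qed.

Lemma coprime_central_den p k :
  prime p -> 2 < p -> coprime p (4 * (4 * p - 1) * 2 ^ k).
Proof.
move=> p_pr p_gt2; have co_p2 : coprime p 2 by rewrite prime_coprime // gtnNdvd.
rewrite !coprimeMr (_ : 4 = 2 ^ 2) // !coprimeXr //= andbT prime_coprime //.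
apply/negP => /(dvdn_sub (dvdn_mull 4 (dvdnn p))).
by rewrite subKn ?dvdn1 => [/eqP|]; lia.
Qed.

Local Open Scope ring_scope.

Lemma coprime_denq p d (c : rat) :
  coprime p d -> c * d%:R \is a Num.int -> coprime p `|denq c|.
Proof.
move=> co_pd /intrP[z Ez]; apply: coprime_dvdr co_pd.
have Eint : numq c * d%:Z = z * denq c.
  by apply: (@intr_inj rat); rewrite !rmorphM /= numqE -Ez mulrAC.
have co_dn : coprime `|denq c| `|numq c| by rewrite coprime_sym coprime_num_den.
rewrite -(Gauss_dvdr _ co_dn) (_ : _ * d = `|(numq c * d%:Z)%R|)%N; last by rewrite abszM.
by rewrite Eint abszM dvdn_mull.
Qed.

Lemma natr_eqn_mod (R : comPzRingType) {m n d : nat} :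
  m = n %[mod d] -> exists z : int, m%:R = n%:R + d%:R * z%:~R :> R.
Proof.
move=> Emn; exists ((m %/ d)%:Z - (n %/ d)%:Z).
rewrite {1}(divn_eq m d) {1}(divn_eq n d) Emn !natrD !natrM intrB !pmulrn; ring.
Qed.

Lemma Fpp_central p : (0 < p)%N -> Fpp p =
  (p ^ 2 * 'C(4 * p, 2 * p) * 'C(2 * p, p))%:R / (4 * (4 * p - 1) * 2 ^ (6 * p - 6))%:R.
Proof.
case: p => // n _; rewrite /Fpp.
have -> : (4 * n.+1 - 3 = (4 * n).+1)%N by lia.
have -> : (4 * n.+1 - 4 = 4 * n)%N by lia.
have -> : (2 * n.+1 - 2 = 2 * n)%N by lia.
have -> : (4 * n.+1 - 1 = (4 * n).+3)%N by lia.
have -> : (4 * n.+1 = (4 * n).+4)%N by lia.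
have -> : (2 * n.+1 = (2 * n).+2)%N by lia.
rewrite subn1 /= -mul_bin_central_Fpp !natrM; field.
by rewrite pnatr_eq0 expn_eq0 -(natrM _ 4 n) -natrD pnatr_eq0.
Qed.

Theorem lemma2p1 (p : nat) (hp : prime p) (hp3 : (3 < p)%N) :
  rat_congr p 4 (Fpp p)
    (- 3%:R * (p ^ 2)%:R - 12%:R * (p ^ 3)%:R + 18%:R * (p ^ 3)%:R * fermat_q2 p).
Proof.
have p_gt0 := prime_gt0 hp; have p_gt2 : (2 < p)%N by lia.
have [x Ex] := natr_eqn_mod rat (bin_mulp_mod 2 1 hp).
have [y Ey] := natr_eqn_mod rat (bin_mulp_mod 4 2 hp).
have [u Eu] : exists u, (2 ^ p.-1 = 1 + u * p)%N.
  by apply: fermat_little_pred; rewrite // prime_coprime // gtnNdvd.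
have [e Ee] := expn1D_sqr (u * p) 6.
have q2E : fermat_q2 p = u%:R.
  by rewrite /fermat_q2 Eu natrD natrM addrAC subrr add0r mulfK // pnatr_eq0 -lt0n.
set D := (4 * (4 * p - 1) * 2 ^ (6 * p - 6))%N.
have D_gt0 : (0 < D)%N by rewrite !muln_gt0 expn_gt0; lia.
have DE : D%:R = 4 * (4 * p%:R - 1) * (1 + 6 * (u%:R * p%:R) + (u%:R * p%:R) ^+ 2 * e%:R) :> rat.
  rewrite /D (_ : 6 * p - 6 = p.-1 * 6)%N; last by lia.
  rewrite expnM Eu Ee !natrM natrB ?natrD ?natrM ?natrX; [ring | lia].
have D0 : D%:R != 0 :> rat by rewrite pnatr_eq0 -lt0n.
(* w is (Fpp p - target) * D / p^4; it is integral because the product of the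
   binomials is 12 mod p^2 while 4 (4p-1) (1 + 6pu) (3 + 12p - 18pu) = -12 mod p^2. *)
pose w : int := 6 * x + 2 * y + p%:Z ^+ 2 * x * y + 192 - 288 * u%:Z
  + 432 * u%:Z ^+ 2 + 1152 * p%:Z * u%:Z - 1728 * p%:Z * u%:Z ^+ 2
  + 4 * (4 * p%:Z - 1) * (3 + 12 * p%:Z - 18 * p%:Z * u%:Z) * u%:Z ^+ 2 * e%:Z.
rewrite /rat_congr Fpp_central // q2E; exists (w%:~R / D%:R); split.
  apply: (coprime_denq (coprime_central_den (6 * p - 6) hp p_gt2)).
  by rewrite -/D (divfK D0) intr_int.
apply: (mulIf D0); rewrite mulrBl mulrA !(divfK D0).
rewrite mul1n in Ex; rewrite DE !natrM Ex Ey /w.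
by rewrite (_ : 'C(4, 2) = 6)%N // (_ : 'C(2, 1) = 2)%N //; ring.
Qed.
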